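(* There exists an anonymous hedonic game with $n=7$ agents having strict and generally single-peaked preferences such that there is an infinite sequence of IS deviations starting from the singleton partition, and there is also an infinite sequence of IS deviations starting from the grand coalition $\{N\}$.
   Context: A hedonic game on agent set $N=[n]$ assigns to each agent $i$ a weak order $\succsim_i$ over coalitions containing $i$. In an anonymous hedonic game (AHG), each agent $i$ has a weak order $\succsim_i^S$ over sizes $\{1,\dots,n\}$ and coalitions are compared only via their sizes. Preferences are strict if these orders are linear. An AHG is generally single-peaked if there is a linear order $>$ on $[n]$ such that for every agent $i$ and all $x,y,z$ with $x>y>z$ or $z>y>x$, $x\succ_i^S y$ implies $y\succsim_i^S z$. The singleton partition is $\{\{i\}:i\in N\}$. An IS deviation of agent $i$ from partition $\pi$ to $\pi'$ is a move of $i$ alone from $\pi(i)$ into another coalition of $\pi$ or into a new singleton such that $\pi'(i)\succ_i\pi(i)$ and $\pi'(j)\succsim_j\pi(j)$ for every $j\in\pi'(i)\setminus\{i\}$. *)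

From mathcomp Require Import all_boot.
Set Implicit Arguments. Unset Strict Implicit. Unset Printing Implicit Defensive.

(* Agents are 'I_n.  Coalition sizes are natural numbers in {1, ..., n}.
   An anonymous hedonic game is given by, for each agent i, a relation
   prefS i x y  meaning  x ≿_i^S y  on sizes. *)

Definition in_sizes (n x : nat) : bool := (1 <= x <= n).

Definition is_AHG (n : nat) (prefS : 'I_n -> nat -> nat -> bool) : Prop :=
  forall i : 'I_n,
    (forall x y, in_sizes n x -> in_sizes n y -> prefS i x y || prefS i y x) /\
    (forall x y z, in_sizes n x -> in_sizes n y -> in_sizes n z ->
       prefS i x y -> prefS i y z -> prefS i x z).

Definition strict_prefs (n : nat) (prefS : 'I_n -> nat -> nat -> bool) : Prop :=
  forall i : 'I_n, forall x y, in_sizes n x -> in_sizes n y ->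
    prefS i x y -> prefS i y x -> x = y.

Definition sprefS (n : nat) (prefS : 'I_n -> nat -> nat -> bool) i x y : bool :=
  prefS i x y && ~~ prefS i y x.

Definition strict_linear_order_on (n : nat) (gt : nat -> nat -> bool) : Prop :=
  (forall x, in_sizes n x -> ~~ gt x x) /\
  (forall x y z, in_sizes n x -> in_sizes n y -> in_sizes n z ->
     gt x y -> gt y z -> gt x z) /\
  (forall x y, in_sizes n x -> in_sizes n y -> x <> y -> gt x y \/ gt y x).

Definition generally_single_peaked (n : nat) (prefS : 'I_n -> nat -> nat -> bool) : Prop :=
  exists gt : nat -> nat -> bool,
    strict_linear_order_on n gt /\
    forall (i : 'I_n) x y z, in_sizes n x -> in_sizes n y -> in_sizes n z ->
      ((gt x y && gt y z) || (gt z y && gt y x)) ->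
      sprefS prefS i x y -> prefS i y z.

(* Partitions of the agent set: {set {set 'I_n}} ; pi(i) = pblock P i. *)

(* The partition obtained from P when agent i leaves its coalition and joins
   C (C a coalition of P, or C = set0 for a new singleton). *)
Definition move (n : nat) (P : {set {set 'I_n}}) (i : 'I_n) (C : {set 'I_n})
  : {set {set 'I_n}} :=
  let B := pblock P i in
  [set X in ((P :\ B) :\ C) :|: [set B :\ i; i |: C] | X != set0].

Definition IS_deviation (n : nat) (prefS : 'I_n -> nat -> nat -> bool)
  (P Q : {set {set 'I_n}}) : Prop :=
  exists (i : 'I_n) (C : {set 'I_n}),
    ((C \in P /\ C != pblock P i) \/ C = set0) /\
    Q = move P i C /\
    sprefS prefS i #|i |: C| #|pblock P i| /\
    (forall j : 'I_n, j \in C -> prefS j #|i |: C| #|C|).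

Definition singleton_partition (n : nat) : {set {set 'I_n}} :=
  [set [set i] | i : 'I_n].

Definition grand_coalition (n : nat) : {set {set 'I_n}} :=
  [set [set: 'I_n]].

Definition infinite_IS_sequence_from (n : nat) (prefS : 'I_n -> nat -> nat -> bool)
  (P0 : {set {set 'I_n}}) : Prop :=
  exists f : nat -> {set {set 'I_n}},
    f 0 = P0 /\ forall k, IS_deviation prefS (f k) (f k.+1).

From mathcomp Require Import all_boot.

Set Implicit Arguments. Unset Strict Implicit. Unset Printing Implicit Defensive.

(* A partition of the agents is encoded by a labelling of the agents: its
   blocks are the fibres.  Agent i moving into the coalition labelled L (into a
   new singleton when no agent carries L) turns the partition of the labelling
   into that of the labelling where i is relabelled L, so IS deviations can be
   checked on labellings by counting.  Each infinite sequence is a lasso: a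
   finite run of deviations whose last partition already occurred earlier, so
   the loop can be repeated forever. *)

Lemma lasso_chain (T : Type) (R : T -> T -> Prop) (x : nat -> T) (p N : nat) :
  p < N -> x N = x p -> (forall j, j < N -> R (x j) (x j.+1)) ->
  exists f : nat -> T, f 0 = x 0 /\ forall k, R (f k) (f k.+1).
Proof.
move=> ltpN loop step.
pose next j := if j.+1 < N then j.+1 else p.
have next_lt j : j < N -> next j < N by rewrite /next; case: ifP.
pose idx k := iter k next 0.
have idx_lt k : idx k < N.
  by elim: k => [|k IHk]; [apply: leq_ltn_trans ltpN | apply: next_lt].
exists (fun k => x (idx k)); split=> // k.
rewrite /idx iterS -/(idx k) /next; case: ltnP => [lt_N|le_N].
  exact/step/ltnW.
have /eqP last_N : (idx k).+1 == N by rewrite eqn_leq le_N idx_lt.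
by rewrite -loop -last_N; apply: step.
Qed.

Section Fibres.

Variables (T : finType) (V : eqType).
Implicit Types (lab : T -> V) (v w L : V) (i x : T) (X : {set T}).

Definition fibre lab v := [set x | lab x == v].
Definition fibres lab := [set fibre lab (lab x) | x : T].

Lemma fibre_self lab x : x \in fibre lab (lab x).
Proof. by rewrite inE. Qed.

Lemma fibresP lab X :
  reflect (exists2 v, X = fibre lab v & X != set0) (X \in fibres lab).
Proof.
apply: (iffP imsetP) => [[x _ ->]|[v -> /set0Pn[x]]].
  by exists (lab x) => //; apply/set0Pn; exists x; apply: fibre_self.
by rewrite inE => /eqP <-; exists x.
Qed.

Lemma fibre_eq lab v w : fibre lab v != set0 -> (fibre lab v == fibre lab w) = (v == w).
Proof.
case/set0Pn=> x; rewrite inE => /eqP <-{v}.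
by apply/eqP/eqP=> [E|<-] //; have := fibre_self lab x; rewrite E inE => /eqP.
Qed.

Lemma trivIset_fibres lab : trivIset (fibres lab).
Proof.
apply/trivIsetP => _ _ /imsetP[x _ ->] /imsetP[y _ ->] neq_xy.
rewrite -setI_eq0; apply/eqP/setP => z; rewrite !inE.
by apply/andP=> -[/eqP zx /eqP zy]; move: neq_xy; rewrite -zx -zy eqxx.
Qed.

Lemma pblock_fibres lab x : pblock (fibres lab) x = fibre lab (lab x).
Proof. by apply: def_pblock; [apply: trivIset_fibres | apply: imset_f | apply: fibre_self]. Qed.

Lemma eq_fibres lab1 lab2 :
  (forall x y, (lab1 x == lab1 y) = (lab2 x == lab2 y)) -> fibres lab1 = fibres lab2.
Proof.
by move=> same; apply: eq_imset => x; apply/setP => y; rewrite !inE same.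
Qed.

Lemma fibres_inj lab : injective lab -> fibres lab = [set [set x] | x : T].
Proof.
by move=> lab_inj; apply: eq_imset => x; apply/setP => y; rewrite !inE (inj_eq lab_inj).
Qed.

Lemma fibres_const v x0 : fibres (fun _ : T => v) = [set setT].
Proof.
apply/setP => X; rewrite inE; apply/imsetP/eqP => [[x _ ->]|->].
  by apply/setP => y; rewrite !inE eqxx.
by exists x0 => //; apply/setP => y; rewrite !inE eqxx.
Qed.

Lemma fibre_update lab i L v :
  fibre (fwith i L lab) v =
  if v == L then i |: fibre lab L else fibre lab v :\ i.
Proof.
case: (v =P L) => [->|/eqP vL]; apply/setP => x; rewrite !inE /=.
  by case: (x =P i); rewrite ?eqxx.
by case: (x =P i) => [->|]; rewrite ?eqxx // eq_sym (negbTE vL).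
Qed.

Lemma fibre_setD1 lab i v : lab i != v -> fibre lab v :\ i = fibre lab v.
Proof.
move=> iv; apply/setP => x; rewrite !inE andb_idl // => /eqP xv.
by apply: contraNneq iv => <-; rewrite xv.
Qed.

End Fibres.

Section Deviations.

Variables (n : nat) (V : eqType) (lab : 'I_n -> V).

Lemma move_fibres i L : L != lab i ->
  move (fibres lab) i (fibre lab L) = fibres (fwith i L lab).
Proof.
move=> Li; apply/setP => X; rewrite /move pblock_fibres inE.
apply/andP/fibresP => [[XA X0]|[v -> X0]].
- move: XA X0; rewrite !inE; case/or3P=> [/and3P[XL Xi /fibresP[v EX _]]|/eqP->|/eqP->] X0.
  + move: XL Xi; rewrite EX in X0 *; rewrite !fibre_eq // => vL vi.
    exists v => //.
    by rewrite fibre_update (negbTE vL) fibre_setD1 // eq_sym.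
  + by exists (lab i) => //; rewrite fibre_update eq_sym (negbTE Li).
  + by exists L => //; rewrite fibre_update eqxx.
- split=> //; move: X0; rewrite fibre_update !inE.
  have [_ _|vL] := eqVneq v L; first by rewrite eqxx !orbT.
  have [-> _|vi] := eqVneq v (lab i); first by rewrite eqxx orbT.
  rewrite fibre_setD1 1?[lab i == v]eq_sym // => X0.
  have vP : fibre lab v \in fibres lab by apply/fibresP; exists v.
  by rewrite !fibre_eq // vL vi vP.
Qed.

Lemma IS_deviation_fwith (prefS : 'I_n -> nat -> nat -> bool) i L :
  L != lab i ->
  sprefS prefS i #|fibre lab L|.+1 #|fibre lab (lab i)| ->
  (forall j, lab j = L -> prefS j #|fibre lab L|.+1 #|fibre lab L|) ->
  IS_deviation prefS (fibres lab) (fibres (fwith i L lab)).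
Proof.
move=> Li better welcome; exists i, (fibre lab L).
have iL : i \notin fibre lab L by rewrite inE eq_sym.
rewrite pblock_fibres cardsU1 iL add1n move_fibres //; split; last first.
  by split=> //; split=> // j; rewrite inE => /eqP /welcome.
have [->|L0] := eqVneq (fibre lab L) set0; [by right | left].
by split; [apply/fibresP; exists L | rewrite fibre_eq].
Qed.

End Deviations.

Definition rank_pref (r : seq nat) (x y : nat) : bool := index x r <= index y r.

Definition precedes (a : seq nat) (x y : nat) : bool := index x a < index y a.

Definition single_peaked_along (a r s : seq nat) : bool :=
  all (fun x => all (fun y => all (fun z =>
    ((precedes a x y && precedes a y z) || (precedes a z y && precedes a y x)) ==>
    (rank_pref r x y && ~~ rank_pref r y x) ==> rank_pref r y z) s) s) s.

Lemma mem_sizes n x : (x \in iota 1 n) = in_sizes n x.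
Proof. by rewrite mem_iota /in_sizes add1n ltnS. Qed.

Section RankingGames.

Variables (n : nat) (r : 'I_n -> seq nat).

Lemma is_AHG_rank : is_AHG (fun i => rank_pref (r i)).
Proof.
by move=> i; split=> [x y _ _|x y z _ _ _]; [apply: leq_total | apply: leq_trans].
Qed.

Lemma strict_prefs_rank :
  (forall i, {subset iota 1 n <= r i}) -> strict_prefs (fun i => rank_pref (r i)).
Proof.
move=> complete i x y; rewrite -!mem_sizes => /(complete i) xr /(complete i) yr xy yx.
by apply: (index_inj 0 xr yr); exact/anti_leq/andP.
Qed.

Lemma strict_linear_order_precedes (a : seq nat) :
  {subset iota 1 n <= a} -> strict_linear_order_on n (precedes a).
Proof.
move=> complete; split; [|split].
- by move=> x _; rewrite /precedes ltnn.
- by move=> x y z _ _ _ xy yz; apply: ltn_trans yz.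
move=> x y; rewrite -!mem_sizes => /complete xa /complete ya neq_xy.
rewrite /precedes; case: ltngtP => [_|_|E]; [by left | by right |].
by case: neq_xy; apply: (index_inj 0 xa ya).
Qed.

Lemma generally_single_peaked_rank (a : seq nat) :
  {subset iota 1 n <= a} -> (forall i, single_peaked_along a (r i) (iota 1 n)) ->
  generally_single_peaked (fun i => rank_pref (r i)).
Proof.
move=> complete sp; exists (precedes a); split; first exact: strict_linear_order_precedes.
move=> i x y z; rewrite -!mem_sizes => xs ys zs between.
by move: (sp i) => /allP/(_ x xs)/allP/(_ y ys)/allP/(_ z zs)/implyP/(_ between)/implyP.
Qed.

End RankingGames.

Section Runs.

Variables (n : nat) (pref : nat -> nat -> nat -> bool).

Definition partition_of (l : nat -> nat) : {set {set 'I_n}} :=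
  fibres (fun i : 'I_n => l i).

Definition label_count (l : nat -> nat) (v : nat) : nat :=
  count (fun k => l k == v) (iota 0 n).

Lemma card_fibre_iota (l : nat -> nat) v : #|fibre (fun i : 'I_n => l i) v| = label_count l v.
Proof.
by rewrite cardsE cardE /enum_mem size_filter -enumT /label_count -val_enum_ord count_map.
Qed.

Lemma all_iota_ord (p : pred nat) : all p (iota 0 n) -> forall i : 'I_n, p i.
Proof. by move=> /allP p_n i; apply: p_n; rewrite mem_iota ltn_ord. Qed.

(* Soundness does not rely on freshness: [IS_step] accepts any target label
   other than the mover's own. *)
Definition fresh_label (l : nat -> nat) : nat := (foldr maxn 0 [seq l k | k <- iota 0 n]).+1.

(* A step [(i, Some c)] moves agent [i] into the coalition of agent [c], a step
   [(i, None)] makes [i] a singleton; agents are numbered from 0. *)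
Definition target (l : nat -> nat) (o : option nat) : nat :=
  if o is Some c then l c else fresh_label l.

Definition apply_step (l : nat -> nat) (w : nat * option nat) : nat -> nat :=
  let: (i, o) := w in fwith i (target l o) l.

Definition IS_step (l : nat -> nat) (w : nat * option nat) : bool :=
  let: (i, o) := w in
  let: L := target l o in
  let: k := label_count l L in
  let: b := label_count l (l i) in
  [&& i < n, L != l i, pref i k.+1 b && ~~ pref i b k.+1 &
      all (fun j => (l j == L) ==> pref j k.+1 k) (iota 0 n)].

Lemma IS_step_deviation l w :
  IS_step l w ->
  IS_deviation (fun i : 'I_n => pref i) (partition_of l) (partition_of (apply_step l w)).
Proof.
case: w => i o /and4P[lt_in Li better welcome].
(* Holds by conversion: equality on ['I_n] compares the underlying naturals. *)
have -> : partition_of (apply_step l (i, o)) =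
          fibres (fwith (Ordinal lt_in) (target l o) (fun j : 'I_n => l j)) by [].
apply: IS_deviation_fwith => //; rewrite !card_fibre_iota //.
by move=> j lj; have := all_iota_ord welcome j; rewrite /= lj eqxx.
Qed.

Definition run (l : nat -> nat) (ws : seq (nat * option nat)) : nat -> nat :=
  foldl apply_step l ws.

Fixpoint IS_run (l : nat -> nat) (ws : seq (nat * option nat)) : bool :=
  if ws is w :: ws' then IS_step l w && IS_run (apply_step l w) ws' else true.

Lemma IS_run_nth l ws j :
  IS_run l ws -> j < size ws -> IS_step (run l (take j ws)) (nth (0, None) ws j).
Proof.
by elim: ws l j => [|w ws IHws] l [|j] //= /andP[step rest] lt_j; last exact: IHws.
Qed.

Lemma run_take_nth l ws j : j < size ws ->
  run l (take j.+1 ws) = apply_step (run l (take j ws)) (nth (0, None) ws j).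
Proof. by move=> lt_j; rewrite (take_nth (0, None) lt_j) /run foldl_rcons. Qed.

Definition same_blocks (l1 l2 : nat -> nat) : bool :=
  all (fun x => all (fun y => (l1 x == l1 y) == (l2 x == l2 y)) (iota 0 n)) (iota 0 n).

Lemma same_blocks_partition l1 l2 :
  same_blocks l1 l2 -> partition_of l1 = partition_of l2.
Proof.
move=> /all_iota_ord same; apply: eq_fibres => x y.
by move: (same x) => /all_iota_ord/(_ y)/eqP.
Qed.

Lemma infinite_IS_sequence_lasso l ws p :
  IS_run l ws -> p < size ws -> same_blocks (run l ws) (run l (take p ws)) ->
  infinite_IS_sequence_from (fun i : 'I_n => pref i) (partition_of l).
Proof.
move=> valid lt_p loop.
pose x j := partition_of (run l (take j ws)).
have [||f [f0 chain]] := lasso_chain (R := IS_deviation (fun i : 'I_n => pref i)) (x := x) lt_p.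
- by rewrite /x take_size; apply: same_blocks_partition.
- by move=> j lt_j; rewrite /x run_take_nth //; apply/IS_step_deviation/IS_run_nth.
by exists f; rewrite f0 /x take0.
Qed.

End Runs.

Definition ranking : seq (seq nat) :=
  [:: [:: 7; 4; 3; 2; 6; 1; 5]; [:: 4; 2; 6; 1; 7; 3; 5]; [:: 2; 4; 7; 3; 6; 1; 5];
      [:: 4; 7; 2; 6; 1; 5; 3]; [:: 6; 1; 5; 2; 4; 7; 3]; [:: 2; 4; 7; 3; 6; 1; 5];
      [:: 4; 7; 3; 2; 6; 1; 5]].

Definition axis : seq nat := [:: 3; 7; 4; 2; 6; 1; 5].

Definition pref7 (k : nat) : nat -> nat -> bool := rank_pref (nth [::] ranking k).

Definition from_singletons : seq (nat * option nat) :=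
  [:: (2, Some 3); (6, Some 0); (5, Some 0); (3, Some 0); (5, Some 1); (3, None);
      (2, Some 0); (1, Some 0); (2, Some 3); (1, None)].

Definition from_grand : seq (nat * option nat) :=
  [:: (1, None); (0, Some 1); (2, None); (4, Some 2); (0, Some 3); (4, None); (5, Some 1);
      (3, None); (2, Some 0); (1, Some 0); (2, Some 3); (1, None); (5, Some 0); (3, Some 0)].

Theorem proposition3p2 :
  exists prefS : 'I_7 -> nat -> nat -> bool,
    is_AHG prefS /\ strict_prefs prefS /\ generally_single_peaked prefS /\
    infinite_IS_sequence_from prefS (singleton_partition 7) /\
    infinite_IS_sequence_from prefS (grand_coalition 7).
Proof.
exists (fun i : 'I_7 => pref7 i); split; first exact: is_AHG_rank.
have sizes_in_axis : {subset iota 1 7 <= axis} by apply/allP; vm_compute.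
have /all_iota_ord sizes_ranked :
    all (fun k => all (fun x => x \in nth [::] ranking k) (iota 1 7)) (iota 0 7).
  by vm_compute.
split; first by apply: strict_prefs_rank => i; apply/allP/sizes_ranked.
split.
  have /all_iota_ord single_peaked :
      all (fun k => single_peaked_along axis (nth [::] ranking k) (iota 1 7)) (iota 0 7).
    by vm_compute.
  exact: generally_single_peaked_rank sizes_in_axis single_peaked.
split.
  have -> : singleton_partition 7 = partition_of 7 id by apply/esym/fibres_inj/val_inj.
  by apply: (infinite_IS_sequence_lasso (ws := from_singletons) (p := 2)); vm_compute.
have -> : grand_coalition 7 = partition_of 7 (fun _ => 0) by apply/esym/fibres_const/ord0.
by apply: (infinite_IS_sequence_lasso (ws := from_grand) (p := 6)); vm_compute.
Qed.
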